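(* Let $f$ be a complex-valued harmonic function in a bounded open set $R\subset\mathbb{C}$. Suppose that $P=\operatorname{int}(\overline{R})\setminus R$ is empty or consists of finitely many poles of $f$, and suppose that $f$ has a $C^1$ extension to some open set $R_1\supset\overline{R}\setminus P$. Then $f(S)\cup f(\partial R\setminus P)$ has empty interior.
   Context: Writing $f=u+iv$, $J_f=u_xv_y-u_yv_x$ and $S=\{z\in R: J_f(z)=0\}$. A point $\alpha$ is a pole of $f$ if $f$ is harmonic in $\{z:0<|z-\alpha|<r\}$ for some $r>0$ and $\lim_{z\to\alpha}|f(z)|=\infty$. $f(\partial R\setminus P)$ denotes the image under the extension. *)

(* the plane C is modelled as R*R, with Coquelicot's total Derive
   for partial derivatives. *)
From Stdlib Require Import Reals List.
From Coquelicot Require Import Coquelicot.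
Open Scope R_scope.

Definition pt := (R * R)%type.

Definition dist (p q : pt) : R :=
  sqrt ((fst p - fst q) ^ 2 + (snd p - snd q) ^ 2).

Definition plane_open (A : pt -> Prop) : Prop :=
  forall p, A p -> exists r, 0 < r /\ forall q, dist p q < r -> A q.

Definition plane_bounded (A : pt -> Prop) : Prop :=
  exists M, forall p, A p -> dist p (0, 0) <= M.

Definition plane_closure (A : pt -> Prop) (p : pt) : Prop :=
  forall r, 0 < r -> exists q, A q /\ dist p q < r.

Definition plane_interior (A : pt -> Prop) (p : pt) : Prop :=
  exists r, 0 < r /\ forall q, dist p q < r -> A q.

Definition plane_boundary (A : pt -> Prop) (p : pt) : Prop :=
  plane_closure A p /\ ~ plane_interior A p.

Definition finite_set (A : pt -> Prop) : Prop :=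
  exists l : list pt, forall z, A z <-> In z l.

Definition cont_at (g : pt -> R) (p : pt) : Prop :=
  forall eps, 0 < eps -> exists d, 0 < d /\
    forall q, dist p q < d -> Rabs (g q - g p) < eps.

Definition dx (g : pt -> R) : pt -> R :=
  fun p => Derive (fun t => g (t, snd p)) (fst p).
Definition dy (g : pt -> R) : pt -> R :=
  fun p => Derive (fun t => g (fst p, t)) (snd p).

Definition C1_on (g : pt -> R) (U : pt -> Prop) : Prop :=
  forall p, U p ->
    ex_derive (fun t => g (t, snd p)) (fst p) /\
    ex_derive (fun t => g (fst p, t)) (snd p) /\
    cont_at g p /\ cont_at (dx g) p /\ cont_at (dy g) p.

Definition rharmonic_on (g : pt -> R) (U : pt -> Prop) : Prop :=
  C1_on g U /\ C1_on (dx g) U /\ C1_on (dy g) U /\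
  forall p, U p -> dx (dx g) p + dy (dy g) p = 0.

(* complex-valued function f = u + i v, as a map pt -> pt *)
Definition re (f : pt -> pt) : pt -> R := fun p => fst (f p).
Definition im (f : pt -> pt) : pt -> R := fun p => snd (f p).

Definition harmonic_on (f : pt -> pt) (U : pt -> Prop) : Prop :=
  rharmonic_on (re f) U /\ rharmonic_on (im f) U.

Definition C1_map_on (f : pt -> pt) (U : pt -> Prop) : Prop :=
  C1_on (re f) U /\ C1_on (im f) U.

Definition jac (f : pt -> pt) (p : pt) : R :=
  dx (re f) p * dy (im f) p - dy (re f) p * dx (im f) p.

Definition cnorm (w : pt) : R := sqrt (fst w ^ 2 + snd w ^ 2).

Definition is_pole (f : pt -> pt) (a : pt) : Prop :=
  (exists r, 0 < r /\ harmonic_on f (fun z => 0 < dist z a < r)) /\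
  (forall M, exists d, 0 < d /\
     forall z, 0 < dist z a < d -> M < cnorm (f z)).

From Coquelicot Require Import Coquelicot.
From Stdlib Require Import Reals Lra Lia List Classical IndefiniteDescription.
From Stdlib Require Cantor.
Open Scope R_scope.

(* Every point of S, and every boundary point outside P, lies in R1 where f is C^1; this is
   all that is used.  Cover R1 by
   countably many rational boxes.  On a box where the partial derivatives are bounded, the
   critical values are nowhere dense (Sard): cut the box into N^2 cells of side h; on a cell
   containing a critical point, f is within eta h of an affine map of rank at most one (eta
   bounding the oscillation of Df), so the critical values of the cell lie in about 1 / eta
   boxes of radius O(eta h).  These N^2 / eta boxes have total area O(eta), too little to meet
   every box of a fine grid.  On a box around a point with J_f <> 0, f satisfies a lower
   Lipschitz bound (quantitative inverse function theorem); a boundary point is a limit of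
   points of R, each the center of a disc inside R, and the lower bound keeps the values on
   the boundary away from the value at that center, so these boundary values are nowhere
   dense as well.  The Baire category theorem then shows that the countable union of all
   these sets has empty interior. *)

Definition cbox (c : pt) (r : R) (p : pt) : Prop :=
  Rabs (fst p - fst c) <= r /\ Rabs (snd p - snd c) <= r.

Definition obox (c : pt) (r : R) (p : pt) : Prop :=
  Rabs (fst p - fst c) < r /\ Rabs (snd p - snd c) < r.

Definition dist1 (p q : pt) : R := Rabs (fst p - fst q) + Rabs (snd p - snd q).

Lemma Rabs_sub_triang x y z : Rabs (x - z) <= Rabs (x - y) + Rabs (y - z).
Proof.
  replace (x - z) with ((x - y) + (y - z)) by ring. apply Rabs_triang.
Qed.

Lemma Rmin_pos_le (a b : R) : 0 < a -> 0 < b -> 0 < Rmin a b /\ Rmin a b <= a /\ Rmin a b <= b.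
Proof. intros Ha Hb. split; [apply Rmin_glb_lt; auto|split; [apply Rmin_l|apply Rmin_r]]. Qed.

Lemma cbox_obox (c : pt) (r r' : R) (p : pt) : r < r' -> cbox c r p -> obox c r' p.
Proof. intros Hr [H1 H2]; split; lra. Qed.

Lemma obox_cbox (c : pt) (r : R) (p : pt) : obox c r p -> cbox c r p.
Proof. intros [H1 H2]; split; lra. Qed.

Lemma cbox_sym (c p : pt) (r : R) : cbox c r p -> cbox p r c.
Proof. intros [H1 H2]; split; rewrite Rabs_minus_sym; assumption. Qed.

Lemma cbox_trans (a b p : pt) (r s : R) : cbox a r b -> cbox b s p -> cbox a (r + s) p.
Proof.
  intros [A1 A2] [B1 B2]; split.
  - pose proof (Rabs_sub_triang (fst p) (fst b) (fst a)); lra.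
  - pose proof (Rabs_sub_triang (snd p) (snd b) (snd a)); lra.
Qed.

Lemma dist_le_dist1 (p q : pt) : dist p q <= dist1 p q.
Proof.
  unfold dist, dist1.
  set (x := fst p - fst q); set (y := snd p - snd q).
  pose proof (Rabs_pos x); pose proof (Rabs_pos y).
  rewrite <- (sqrt_Rsqr (Rabs x + Rabs y)) by lra.
  apply sqrt_le_1_alt.
  pose proof (Rsqr_abs x); pose proof (Rsqr_abs y). unfold Rsqr in *. nra.
Qed.

Lemma Rabs_le_sqrt_sum_sq (x y : R) : Rabs x <= sqrt (x ^ 2 + y ^ 2).
Proof.
  rewrite <- sqrt_Rsqr_abs. apply sqrt_le_1_alt. unfold Rsqr. nra.
Qed.

Lemma cbox_of_dist (c p : pt) (r : R) : dist c p <= r -> cbox c r p.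
Proof.
  unfold dist. intros H.
  pose proof (Rabs_le_sqrt_sum_sq (fst c - fst p) (snd c - snd p)).
  pose proof (Rabs_le_sqrt_sum_sq (snd c - snd p) (fst c - fst p)).
  rewrite Rplus_comm in H1.
  split; rewrite Rabs_minus_sym; lra.
Qed.

Lemma dist_of_obox_half (c p : pt) (r : R) : obox c (r / 2) p -> dist c p < r.
Proof.
  intros [H1 H2]. pose proof (dist_le_dist1 c p). unfold dist1 in H.
  rewrite Rabs_minus_sym in H1, H2. lra.
Qed.

Lemma dist_diag (z : pt) : dist z z = 0.
Proof.
  unfold dist. rewrite !Rminus_diag. replace (0 ^ 2 + 0 ^ 2) with 0 by ring. apply sqrt_0.
Qed.

(** * The Baire category theorem *)

Lemma exists_inv_succ_lt (eps : R) : 0 < eps -> exists K : nat, / (INR K + 1) < eps.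
Proof.
  intros He. destruct (nfloor_ex (/ eps)) as [n [H1 H2]].
  { left; apply Rinv_0_lt_compat; lra. }
  exists n. pose proof (pos_INR n).
  rewrite <- (Rinv_inv eps). apply Rinv_lt_contravar; try lra.
  apply Rmult_lt_0_compat; [apply Rinv_0_lt_compat|]; lra.
Qed.

Lemma Un_cv_eventually_close (x : nat -> R) (l a rho : R) (m : nat) :
  Un_cv x l -> (forall j, (m <= j)%nat -> Rabs (x j - a) <= rho) -> Rabs (l - a) <= rho.
Proof.
  intros Hcv Hb. apply Rnot_lt_le. intros Hlt.
  destruct (Hcv (Rabs (l - a) - rho)) as [N HN]; [lra|].
  specialize (HN (max N m) (Nat.le_max_l _ _)). specialize (Hb (max N m) (Nat.le_max_r _ _)).
  unfold R_dist in HN. rewrite Rabs_minus_sym in HN.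
  pose proof (Rabs_sub_triang l (x (max N m)) a). lra.
Qed.

Lemma nested_sequence_limit (x r : nat -> R) :
  (forall n, r (S n) <= / (INR n + 1)) ->
  (forall m j, (m <= j)%nat -> Rabs (x j - x m) <= r m) ->
  exists l, forall m, Rabs (l - x m) <= r m.
Proof.
  intros Hr Hx.
  assert (Hcauchy : Cauchy_crit x).
  { intros eps He. destruct (exists_inv_succ_lt (eps / 2)) as [K HK]; [lra|].
    exists (S K). intros n m Hn Hm. unfold R_dist.
    pose proof (Hx (S K) n Hn). pose proof (Hx (S K) m Hm). pose proof (Hr K).
    pose proof (Rabs_sub_triang (x n) (x (S K)) (x m)).
    rewrite (Rabs_minus_sym (x (S K))) in H2. lra. }
  destruct (R_complete x Hcauchy) as [l Hl].
  exists l. intros m. apply (Un_cv_eventually_close x l _ _ m Hl), Hx.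
Qed.

Lemma nested_boxes_meet (c : nat -> pt) (r : nat -> R) :
  (forall n, 0 <= r n) -> (forall n, r (S n) <= / (INR n + 1)) ->
  (forall n y, cbox (c (S n)) (r (S n)) y -> cbox (c n) (r n) y) ->
  exists y, forall n, cbox (c n) (r n) y.
Proof.
  intros Hpos Hr Hnest.
  assert (Hsub : forall m j, (m <= j)%nat -> forall y, cbox (c j) (r j) y -> cbox (c m) (r m) y).
  { intros m j Hmj. induction Hmj as [|j _ IH]; auto. }
  assert (Hcenters : forall m j, (m <= j)%nat -> cbox (c m) (r m) (c j)).
  { intros m j Hmj. apply (Hsub m j Hmj).
    split; rewrite Rminus_diag, Rabs_R0; apply Hpos. }
  destruct (nested_sequence_limit (fun n => fst (c n)) r Hr) as [l1 Hl1].
  { intros m j Hmj. apply (Hcenters m j Hmj). }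
  destruct (nested_sequence_limit (fun n => snd (c n)) r Hr) as [l2 Hl2].
  { intros m j Hmj. apply (Hcenters m j Hmj). }
  exists (l1, l2). intros n. split; simpl; auto.
Qed.

Definition nowhere_dense (F : pt -> Prop) : Prop :=
  forall w r, 0 < r -> exists w' r', 0 < r' /\
    (forall y, cbox w' r' y -> obox w r y) /\ (forall y, cbox w' r' y -> ~ F y).

Lemma nowhere_dense_subset (F G : pt -> Prop) :
  nowhere_dense F -> (forall y, G y -> F y) -> nowhere_dense G.
Proof.
  intros HF HGF w r Hr. destruct (HF w r Hr) as [w' [r' [H1 [H2 H3]]]].
  exists w', r'. split; [|split]; auto. intros y Hy HGy. apply (H3 y Hy), HGF, HGy.
Qed.

Lemma nowhere_dense_empty (F : pt -> Prop) : (forall y, ~ F y) -> nowhere_dense F.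
Proof.
  intros H w r Hr. exists w, (r / 2). split; [lra|split].
  - intros y [H1 H2]. split; lra.
  - intros y _. apply H.
Qed.

Lemma nowhere_dense_union (F G : pt -> Prop) :
  nowhere_dense F -> nowhere_dense G -> nowhere_dense (fun y => F y \/ G y).
Proof.
  intros HF HG w r Hr.
  destruct (HF w r Hr) as [w1 [r1 [Hr1 [Hin1 Hout1]]]].
  destruct (HG w1 r1 Hr1) as [w2 [r2 [Hr2 [Hin2 Hout2]]]].
  exists w2, r2. split; [exact Hr2|split].
  - intros y Hy. apply Hin1, obox_cbox, Hin2, Hy.
  - intros y Hy [HFy|HGy].
    + apply (Hout1 y); auto. apply obox_cbox, Hin2, Hy.
    + apply (Hout2 y Hy HGy).
Qed.

Lemma nowhere_dense_small_box (F : pt -> Prop) (k : nat) :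
  nowhere_dense F -> forall c rho, 0 < rho -> exists c' rho',
    0 < rho' /\ rho' <= / (INR k + 1) /\
    (forall y, cbox c' rho' y -> obox c rho y) /\ (forall y, cbox c' rho' y -> ~ F y).
Proof.
  intros HF c rho Hrho.
  destruct (HF c rho Hrho) as [c' [r' [Hr' [Hin Hout]]]].
  assert (Hk : 0 < / (INR k + 1)) by (apply Rinv_0_lt_compat; pose proof (pos_INR k); lra).
  assert (Hshrink : forall y, cbox c' (Rmin r' (/ (INR k + 1))) y -> cbox c' r' y).
  { intros y [H1 H2]; pose proof (Rmin_l r' (/ (INR k + 1))); split; lra. }
  exists c', (Rmin r' (/ (INR k + 1))).
  split; [apply Rmin_glb_lt; lra|split; [apply Rmin_r|split]]; intros y Hy.
  - apply Hin, Hshrink, Hy.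
  - apply Hout, Hshrink, Hy.
Qed.

Lemma baire_category (F : nat -> pt -> Prop) : (forall k, nowhere_dense (F k)) ->
  forall w r, 0 < r -> exists y, obox w r y /\ forall k, ~ F k y.
Proof.
  intros HF w r Hr.
  assert (Hstep : forall x : nat * pt * R, exists y : pt * R,
    let '(k, c, rho) := x in 0 < rho ->
      0 < snd y /\ snd y <= / (INR k + 1) /\
      (forall z, cbox (fst y) (snd y) z -> obox c rho z) /\
      (forall z, cbox (fst y) (snd y) z -> ~ F k z)).
  { intros [[k c] rho]. destruct (Rlt_dec 0 rho) as [Hrho|Hrho].
    - destruct (nowhere_dense_small_box (F k) k (HF k) c rho Hrho) as [c' [rho' H]].
      exists (c', rho'). intros _. exact H.
    - exists (c, rho). intros H; lra. }
  destruct (functional_choice _ Hstep) as [G HG].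
  set (box := fix box (n : nat) : pt * R :=
    match n with O => (w, r) | S k => G (k, fst (box k), snd (box k)) end).
  assert (Hpos : forall n, 0 < snd (box n)).
  { induction n as [|n IH]; simpl; auto. apply (HG (n, fst (box n), snd (box n))), IH. }
  assert (Hnext : forall k, snd (box (S k)) <= / (INR k + 1) /\
      (forall z, cbox (fst (box (S k))) (snd (box (S k))) z ->
                 obox (fst (box k)) (snd (box k)) z) /\
      (forall z, cbox (fst (box (S k))) (snd (box (S k))) z -> ~ F k z)).
  { intros k. apply (HG (k, fst (box k), snd (box k)) (Hpos k)). }
  destruct (nested_boxes_meet (fun n => fst (box n)) (fun n => snd (box n))) as [y Hy].
  - intros n. left; apply Hpos.
  - intros n. apply Hnext.
  - intros n z Hz. apply obox_cbox, Hnext, Hz.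
  - exists y. split.
    + apply (Hnext 0%nat), Hy.
    + intros k. apply (Hnext k), Hy.
Qed.

Lemma cont_at_line_x (g : pt -> R) (x y : R) :
  cont_at g (x, y) -> continuity_pt (fun t => g (t, y)) x.
Proof.
  intros Hc eps He. destruct (Hc eps He) as [d [Hd H]]. exists d. split; auto.
  intros s [_ Hs]. simpl in *. unfold R_dist in *. apply H.
  pose proof (dist_le_dist1 (x, y) (s, y)). unfold dist1 in H0. simpl in H0.
  rewrite Rminus_diag, Rabs_R0, Rabs_minus_sym in H0. lra.
Qed.

Lemma cont_at_line_y (g : pt -> R) (x y : R) :
  cont_at g (x, y) -> continuity_pt (fun t => g (x, t)) y.
Proof.
  intros Hc eps He. destruct (Hc eps He) as [d [Hd H]]. exists d. split; auto.
  intros s [_ Hs]. simpl in *. unfold R_dist in *. apply H.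
  pose proof (dist_le_dist1 (x, y) (x, s)). unfold dist1 in H0. simpl in H0.
  rewrite Rminus_diag, Rabs_R0, Rabs_minus_sym in H0. lra.
Qed.

Lemma mean_value_axis_path (g : pt -> R) (U : pt -> Prop) (a b : pt) :
  C1_on g U ->
  (forall t, Rmin (fst a) (fst b) <= t <= Rmax (fst a) (fst b) -> U (t, snd a)) ->
  (forall t, Rmin (snd a) (snd b) <= t <= Rmax (snd a) (snd b) -> U (fst b, t)) ->
  exists t t', Rmin (fst a) (fst b) <= t <= Rmax (fst a) (fst b) /\
    Rmin (snd a) (snd b) <= t' <= Rmax (snd a) (snd b) /\
    g b - g a = dx g (t, snd a) * (fst b - fst a) + dy g (fst b, t') * (snd b - snd a).
Proof.
  intros HC H1 H2.
  destruct (MVT_gen (fun t => g (t, snd a)) (fst a) (fst b) (fun t => dx g (t, snd a)))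
    as [t [Ht Et]].
  { intros x Hx. destruct (HC (x, snd a) (H1 x ltac:(lra))) as [Hd _].
    apply (Derive_correct _ _ Hd). }
  { intros x Hx. destruct (HC (x, snd a) (H1 x Hx)) as [_ [_ [Hc _]]].
    apply cont_at_line_x, Hc. }
  destruct (MVT_gen (fun t => g (fst b, t)) (snd a) (snd b) (fun t => dy g (fst b, t)))
    as [t' [Ht' Et']].
  { intros x Hx. destruct (HC (fst b, x) (H2 x ltac:(lra))) as [_ [Hd _]].
    apply (Derive_correct _ _ Hd). }
  { intros x Hx. destruct (HC (fst b, x) (H2 x Hx)) as [_ [_ [Hc _]]].
    apply cont_at_line_y, Hc. }
  exists t, t'. split; auto. split; auto.
  simpl in Et, Et'. destruct a as [a1 a2], b as [b1 b2]. simpl in *. lra.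
Qed.

Lemma between_in_interval (x y t c r : R) :
  Rmin x y <= t <= Rmax x y -> Rabs (x - c) <= r -> Rabs (y - c) <= r -> Rabs (t - c) <= r.
Proof.
  intros [H1 H2] Hx Hy. unfold Rmin, Rmax in *.
  destruct (Rle_dec x y); revert Hx Hy; split_Rabs; lra.
Qed.

Definition partials_close (f : pt -> pt) (eta : R) (p q : pt) : Prop :=
  Rabs (dx (re f) p - dx (re f) q) <= eta /\ Rabs (dy (re f) p - dy (re f) q) <= eta /\
  Rabs (dx (im f) p - dx (im f) q) <= eta /\ Rabs (dy (im f) p - dy (im f) q) <= eta.

Definition partials_bounded (f : pt -> pt) (M : R) (p : pt) : Prop :=
  Rabs (dx (re f) p) <= M /\ Rabs (dy (re f) p) <= M /\
  Rabs (dx (im f) p) <= M /\ Rabs (dy (im f) p) <= M.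

Lemma C1_affine_approx (g : pt -> R) (U : pt -> Prop) (c : pt) (r a0 b0 eta : R) :
  C1_on g U -> (forall x, cbox c r x -> U x) ->
  (forall x, cbox c r x -> Rabs (dx g x - a0) <= eta /\ Rabs (dy g x - b0) <= eta) ->
  forall p q, cbox c r p -> cbox c r q ->
  Rabs (g p - g q - (a0 * (fst p - fst q) + b0 * (snd p - snd q))) <= eta * dist1 p q.
Proof.
  intros HC HU Hd p q [Hp1 Hp2] [Hq1 Hq2].
  assert (Hx : forall t, Rmin (fst q) (fst p) <= t <= Rmax (fst q) (fst p) -> cbox c r (t, snd q)).
  { intros t Ht. split; simpl; auto. apply (between_in_interval _ _ _ _ _ Ht); auto. }
  assert (Hy : forall t, Rmin (snd q) (snd p) <= t <= Rmax (snd q) (snd p) -> cbox c r (fst p, t)).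
  { intros t Ht. split; simpl; auto. apply (between_in_interval _ _ _ _ _ Ht); auto. }
  destruct (mean_value_axis_path g U q p HC) as [t [t' [Ht [Ht' E]]]].
  { intros t Ht. apply HU, Hx, Ht. }
  { intros t Ht. apply HU, Hy, Ht. }
  rewrite E. unfold dist1.
  destruct (Hd _ (Hx t Ht)) as [Ha _]. destruct (Hd _ (Hy t' Ht')) as [_ Hb].
  replace (dx g (t, snd q) * (fst p - fst q) + dy g (fst p, t') * (snd p - snd q) -
     (a0 * (fst p - fst q) + b0 * (snd p - snd q))) with
    ((dx g (t, snd q) - a0) * (fst p - fst q) + (dy g (fst p, t') - b0) * (snd p - snd q))
    by ring.
  eapply Rle_trans; [apply Rabs_triang|]. rewrite !Rabs_mult.
  pose proof (Rabs_pos (fst p - fst q)). pose proof (Rabs_pos (snd p - snd q)).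
  pose proof (Rmult_le_compat_r _ _ _ H Ha). pose proof (Rmult_le_compat_r _ _ _ H0 Hb).
  lra.
Qed.

Lemma C1_map_affine_approx (f : pt -> pt) (U : pt -> Prop) (c z : pt) (r eta : R) :
  C1_map_on f U -> (forall x, cbox c r x -> U x) ->
  (forall x, cbox c r x -> partials_close f eta x z) ->
  forall p q, cbox c r p -> cbox c r q ->
  Rabs (re f p - re f q - (dx (re f) z * (fst p - fst q) + dy (re f) z * (snd p - snd q)))
    <= eta * dist1 p q /\
  Rabs (im f p - im f q - (dx (im f) z * (fst p - fst q) + dy (im f) z * (snd p - snd q)))
    <= eta * dist1 p q.
Proof.
  intros [Hu Hv] HU Hclose p q Hp Hq. split.
  - apply (C1_affine_approx _ U c r); auto.
    intros x Hx. destruct (Hclose x Hx) as [H1 [H2 _]]. auto.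
  - apply (C1_affine_approx _ U c r); auto.
    intros x Hx. destruct (Hclose x Hx) as [_ [_ [H1 H2]]]. auto.
Qed.

Lemma box_uniform_continuity (g : pt -> R) (c : pt) (e : R) :
  (forall p, cbox c e p -> cont_at g p) ->
  forall eta, 0 < eta -> exists delta, 0 < delta /\ forall p q, cbox c e p -> cbox c e q ->
    cbox p delta q -> Rabs (g p - g q) <= eta.
Proof.
  intros Hc eta He.
  assert (Hloc : forall uv : R * R, exists d : posreal, cbox c e uv ->
     forall q, dist uv q < 4 * d -> Rabs (g q - g uv) < eta / 2).
  { intros uv. destruct (classic (cbox c e uv)) as [Hin|Hout].
    - destruct (Hc uv Hin (eta / 2)) as [d0 [Hd0 H]]; [lra|].
      assert (Hp : 0 < d0 / 4) by lra. exists (mkposreal _ Hp).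
      intros _ q Hq. apply H. simpl in Hq. lra.
    - exists (mkposreal 1 Rlt_0_1). intros H; contradiction. }
  destruct (functional_choice _ Hloc) as [D HD].
  destruct (compactness_value_2d (fst c - e) (fst c + e) (snd c - e) (snd c + e)
              (fun u v => D (u, v))) as [d' Hd'].
  exists (d' / 2). split; [pose proof (cond_pos d'); lra|].
  intros p q [Hp1 Hp2] Hq [H1 H2].
  apply Rabs_le_between' in Hp1, Hp2.
  specialize (Hd' (fst p) (snd p) Hp1 Hp2).
  apply Rlt_le, NNPP. intro Hneg. apply Hd'. intros [u [v [Hu [Hv [Hpu [Hpv Hdd]]]]]].
  apply Hneg.
  assert (Huv : cbox c e (u, v)) by (split; simpl; apply Rabs_le_between'; lra).
  specialize (HD (u, v) Huv). pose proof (cond_pos (D (u, v))) as HDpos.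
  assert (Hnear : forall y, obox (u, v) (4 * D (u, v) / 2) y -> Rabs (g y - g (u, v)) < eta / 2)
    by (intros y Hy; apply HD, dist_of_obox_half, Hy).
  assert (A1 : Rabs (g p - g (u, v)) < eta / 2) by (apply Hnear; split; simpl; lra).
  assert (A2 : Rabs (g q - g (u, v)) < eta / 2).
  { apply Hnear. pose proof (Rabs_sub_triang (fst q) (fst p) u).
    pose proof (Rabs_sub_triang (snd q) (snd p) v). split; simpl; lra. }
  pose proof (Rabs_sub_triang (g p) (g (u, v)) (g q)).
  rewrite (Rabs_minus_sym (g (u, v))) in H. lra.
Qed.

Lemma partials_uniformly_close (f : pt -> pt) (U : pt -> Prop) (c : pt) (e : R) :
  C1_map_on f U -> (forall p, cbox c e p -> U p) ->
  forall eta, 0 < eta -> exists delta, 0 < delta /\ forall p q, cbox c e p -> cbox c e q ->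
    cbox p delta q -> partials_close f eta p q.
Proof.
  intros [Hu Hv] HU eta He.
  assert (Hcont : forall g, C1_on g U ->
            (forall p, cbox c e p -> cont_at (dx g) p) /\
            (forall p, cbox c e p -> cont_at (dy g) p)).
  { intros g Hg. split; intros p Hp; apply (Hg p (HU p Hp)). }
  destruct (Hcont _ Hu) as [Cux Cuy]. destruct (Hcont _ Hv) as [Cvx Cvy].
  destruct (box_uniform_continuity _ c e Cux eta He) as [d1 [Hd1 U1]].
  destruct (box_uniform_continuity _ c e Cuy eta He) as [d2 [Hd2 U2]].
  destruct (box_uniform_continuity _ c e Cvx eta He) as [d3 [Hd3 U3]].
  destruct (box_uniform_continuity _ c e Cvy eta He) as [d4 [Hd4 U4]].
  destruct (Rmin_pos_le d1 d2) as (H12 & H1 & H2); auto.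
  destruct (Rmin_pos_le d3 d4) as (H34 & H3 & H4); auto.
  destruct (Rmin_pos_le _ _ H12 H34) as (Hdelta & H5 & H6).
  exists (Rmin (Rmin d1 d2) (Rmin d3 d4)). split; auto.
  intros p q Hp Hq [Hpq1 Hpq2].
  repeat split; [apply U1|apply U2|apply U3|apply U4]; auto; split; lra.
Qed.

(** * Sard's theorem *)

Lemma singular_row_multiple (a b c d : R) :
  a * d - b * c = 0 -> c ^ 2 + d ^ 2 <= a ^ 2 + b ^ 2 ->
  exists l, Rabs l <= 1 /\ c = l * a /\ d = l * b.
Proof.
  intros Hdet Hle.
  destruct (Req_dec (a ^ 2 + b ^ 2) 0) as [H0|H0].
  - exists 0. assert (a = 0) by nra. assert (b = 0) by nra.
    assert (c = 0) by nra. assert (d = 0) by nra.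
    subst. rewrite Rabs_R0. split; [lra|split; ring].
  - set (l := (a * c + b * d) / (a ^ 2 + b ^ 2)).
    assert (Eb := f_equal (Rmult b) Hdet). assert (Ea := f_equal (Rmult a) Hdet).
    assert (Hc : c = l * a) by (unfold l; field_simplify_eq; [lra|auto]).
    assert (Hd : d = l * b) by (unfold l; field_simplify_eq; [lra|auto]).
    exists l. split; [|auto].
    assert (l ^ 2 <= 1).
    { apply Rmult_le_reg_r with (a ^ 2 + b ^ 2); [nra|]. rewrite Hc, Hd in Hle. nra. }
    apply Rabs_le. nra.
Qed.

Lemma singular_matrix_rank_one (a b c d : R) : a * d - b * c = 0 ->
  exists al be a' b', Rabs al <= 1 /\ Rabs be <= 1 /\
    ((a' = a /\ b' = b) \/ (a' = c /\ b' = d)) /\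
    forall x y, a * x + b * y = al * (a' * x + b' * y) /\ c * x + d * y = be * (a' * x + b' * y).
Proof.
  intros Hdet. destruct (Rle_dec (c ^ 2 + d ^ 2) (a ^ 2 + b ^ 2)) as [Hle|Hgt].
  - destruct (singular_row_multiple a b c d Hdet Hle) as [l [Hl [Hc Hd]]].
    exists 1, l, a, b. rewrite Rabs_R1.
    split; [lra|split; [exact Hl|split; [left; auto|]]].
    intros x y. rewrite Hc, Hd. split; ring.
  - destruct (singular_row_multiple c d a b ltac:(lra) ltac:(lra)) as [l [Hl [Ha Hb]]].
    exists l, 1, c, d. rewrite Rabs_R1.
    split; [exact Hl|split; [lra|split; [right; auto|]]].
    intros x y. rewrite Ha, Hb. split; ring.
Qed.

Lemma interval_cell (N : nat) (h a x : R) : 0 < h -> (1 <= N)%nat ->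
  a <= x <= a + INR N * h -> exists i, (i < N)%nat /\ a + INR i * h <= x <= a + (INR i + 1) * h.
Proof.
  intros Hh HN. induction N as [|N IH]; [lia|]. intros Hx.
  destruct (Nat.eq_dec N 0) as [->|HN0].
  - exists 0%nat. split; [lia|]. simpl in *. lra.
  - destruct (Rle_dec x (a + INR N * h)) as [Hle|Hgt].
    + destruct (IH ltac:(lia) ltac:(lra)) as [i [Hi Hx']]. exists i. split; [lia|auto].
    + exists N. split; [lia|]. rewrite S_INR in Hx. lra.
Qed.

Lemma interval_piece (k : nat) (B X : R) : 0 < B -> (1 <= k)%nat -> Rabs X <= B ->
  exists p, (p < k)%nat /\ Rabs (X - (- B + (INR p + / 2) * (2 * B / INR k))) <= B / INR k.
Proof.
  intros HB Hk HX.
  assert (Hk0 : 0 < INR k) by (apply lt_0_INR; lia).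
  destruct (interval_cell k (2 * B / INR k) (- B) X) as [p [Hp Hx]]; auto.
  { apply Rdiv_lt_0_compat; lra. }
  { replace (INR k * (2 * B / INR k)) with (2 * B) by (field; lra).
    apply Rabs_le_between in HX. lra. }
  exists p. split; auto.
  replace (B / INR k) with ((2 * B / INR k) / 2) by (field; lra).
  apply Rabs_le. lra.
Qed.

Lemma Rabs_shift_scaled (F X s l E D : R) :
  Rabs (F - l * X) <= E -> Rabs l <= 1 -> Rabs (X - s) <= D -> Rabs (F - l * s) <= E + D.
Proof.
  intros HF Hl Hs.
  replace (F - l * s) with ((F - l * X) + l * (X - s)) by ring.
  eapply Rle_trans; [apply Rabs_triang|]. rewrite Rabs_mult.
  pose proof (Rabs_pos (X - s)). pose proof (Rabs_pos l). nra.
Qed.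

Lemma Rabs_linear_le (a b x y M h : R) :
  Rabs a <= M -> Rabs b <= M -> Rabs x <= h -> Rabs y <= h -> Rabs (a * x + b * y) <= 2 * M * h.
Proof.
  intros Ha Hb Hx Hy. eapply Rle_trans; [apply Rabs_triang|]. rewrite !Rabs_mult.
  pose proof (Rabs_pos a). pose proof (Rabs_pos b). pose proof (Rabs_pos x). nra.
Qed.

Lemma partials_bounded_mono (f : pt -> pt) (M M' : R) (p : pt) :
  M <= M' -> partials_bounded f M p -> partials_bounded f M' p.
Proof. intros HM (H1 & H2 & H3 & H4). repeat split; lra. Qed.

(* Near a critical point the image of a cell of side h lies within 2 eta h of a segment
   of length 4 Mb h, which is covered by k boxes. *)
Lemma critical_cell_cover (f : pt -> pt) (U : pt -> Prop) (cc : pt) (h eta Mb : R) (k : nat) :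
  C1_map_on f U -> (forall x, cbox cc (h / 2) x -> U x) -> 0 < h -> 0 < Mb -> (1 <= k)%nat ->
  (forall x, cbox cc (h / 2) x -> partials_bounded f Mb x) ->
  (forall x y, cbox cc (h / 2) x -> cbox cc (h / 2) y -> partials_close f eta x y) ->
  exists cen : list pt, length cen = k /\
    forall z, cbox cc (h / 2) z -> jac f z = 0 ->
      exists c, In c cen /\ cbox c (2 * Mb * h / INR k + 2 * eta * h) (f z).
Proof.
  intros HC HU Hh HMb Hk Hbd Hclose.
  destruct (classic (exists zc, cbox cc (h / 2) zc /\ jac f zc = 0)) as [[zc [Hzc Jzc]] | Hno].
  2:{ exists (repeat cc k). split; [apply repeat_length|].
      intros z Hz Jz. exfalso. apply Hno. eauto. }
  assert (Happrox := C1_map_affine_approx f U cc zc (h / 2) eta HC HU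
                       (fun x Hx => Hclose x zc Hx Hzc)).
  unfold jac in Jzc.
  destruct (singular_matrix_rank_one _ _ _ _ Jzc) as (al & be & a' & b' & Hal & Hbe & Hrow & Hfac).
  set (B := 2 * Mb * h).
  assert (HB : 0 < B) by (unfold B; nra).
  assert (Hk0 : 0 < INR k) by (apply lt_0_INR; lia).
  set (Xs := fun p : nat => - B + (INR p + / 2) * (2 * B / INR k)).
  exists (map (fun p => (re f zc + al * Xs p, im f zc + be * Xs p)) (seq 0 k)).
  split; [rewrite length_map, length_seq; reflexivity|].
  intros z Hz Jz.
  assert (Hzz : cbox zc h z).
  { replace h with (h / 2 + h / 2) by field.
    apply (cbox_trans zc cc); [apply cbox_sym|]; auto. }
  destruct Hzz as [Hdx Hdy].
  set (X0 := a' * (fst z - fst zc) + b' * (snd z - snd zc)).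
  assert (HX0 : Rabs X0 <= B).
  { destruct (Hbd zc Hzc) as (H1 & H2 & H3 & H4).
    apply Rabs_linear_le; auto; destruct Hrow as [[-> ->]|[-> ->]]; auto. }
  destruct (interval_piece k B X0 HB Hk HX0) as [p [Hp HXp]].
  eexists. split.
  { apply in_map_iff. exists p. split; [reflexivity|]. apply in_seq. lia. }
  assert (Hdist : eta * dist1 z zc <= 2 * eta * h).
  { destruct (Hclose z z Hz Hz) as [Heta _]. rewrite Rminus_diag, Rabs_R0 in Heta.
    unfold dist1. nra. }
  destruct (Happrox z zc Hz Hzc) as [Hu Hv].
  destruct (Hfac (fst z - fst zc) (snd z - snd zc)) as [Eu Ev].
  fold X0 in Eu, Ev. rewrite Eu in Hu. rewrite Ev in Hv.
  replace (2 * Mb * h / INR k) with (B / INR k) by (unfold B; reflexivity).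
  change (Rabs (X0 - Xs p) <= B / INR k) in HXp.
  split; simpl; unfold re, im in *.
  - replace (fst (f z) - (fst (f zc) + al * Xs p))
      with ((fst (f z) - fst (f zc)) - al * Xs p) by ring.
    pose proof (Rabs_shift_scaled _ _ _ _ _ _ Hu Hal HXp). lra.
  - replace (snd (f z) - (snd (f zc) + be * Xs p))
      with ((snd (f z) - snd (f zc)) - be * Xs p) by ring.
    pose proof (Rabs_shift_scaled _ _ _ _ _ _ Hv Hbe HXp). lra.
Qed.

Lemma pigeonhole_cover {A : Type} (M : nat) (L : list A) (hit : A -> nat -> Prop) :
  (forall c x x', hit c x -> hit c x' -> x = x') ->
  (forall x, (x < M)%nat -> exists c, In c L /\ hit c x) -> (M <= length L)%nat.
Proof.
  intros Huniq Hcov.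
  assert (Hpick : forall c, exists x, (exists x', hit c x') -> hit c x).
  { intros c. destruct (classic (exists x', hit c x')) as [[x' Hx']|Hnone].
    - exists x'. auto.
    - exists 0%nat. intros H; contradiction. }
  destruct (functional_choice _ Hpick) as [phi Hphi].
  assert (Hincl : incl (seq 0 M) (map phi L)).
  { intros x Hx. apply in_seq in Hx. destruct (Hcov x (proj2 Hx)) as [c [Hc Hhit]].
    apply in_map_iff. exists c. split; auto. apply (Huniq c); eauto. }
  pose proof (NoDup_incl_length (seq_NoDup M 0) Hincl) as Hlen.
  rewrite length_map, length_seq in Hlen. exact Hlen.
Qed.

Lemma INR_neq_sep (i j : nat) : i <> j -> 1 <= Rabs (INR i - INR j).
Proof.
  intros H. destruct (Nat.lt_gt_cases i j) as [[Hl|Hl] _]; auto; apply le_INR in Hl;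
    rewrite S_INR in Hl; [rewrite Rabs_minus_sym|]; rewrite Rabs_pos_eq; lra.
Qed.

Lemma grid_coord_unique (a sigma rho t : R) (i j : nat) :
  4 * rho < sigma ->
  Rabs (t - (a + (INR i + / 2) * sigma)) <= 2 * rho ->
  Rabs (t - (a + (INR j + / 2) * sigma)) <= 2 * rho -> i = j.
Proof.
  intros Hsig Hi Hj. apply NNPP. intros Hij.
  pose proof (INR_neq_sep i j Hij) as Hsep.
  assert (Hsig0 : 0 < sigma) by (pose proof (Rabs_pos (t - (a + (INR i + / 2) * sigma))); lra).
  pose proof (Rabs_sub_triang (a + (INR i + / 2) * sigma) t (a + (INR j + / 2) * sigma)).
  rewrite (Rabs_minus_sym _ t) in H.
  replace (a + (INR i + / 2) * sigma - (a + (INR j + / 2) * sigma))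
    with ((INR i - INR j) * sigma) in H by ring.
  rewrite Rabs_mult, (Rabs_pos_eq sigma) in H by lra.
  pose proof (Rmult_le_compat_r sigma _ _ (Rlt_le _ _ Hsig0) Hsep). lra.
Qed.

Lemma grid_coord_inside (a s sigma rho t : R) (i m : nat) :
  (i < m)%nat -> INR m * sigma <= 2 * s -> 2 * rho < sigma ->
  Rabs (t - (a + (INR i + / 2) * sigma)) <= rho -> Rabs (t - (a + s)) < s.
Proof.
  intros Him Hm Hsig Ht. apply le_INR in Him. rewrite S_INR in Him.
  pose proof (pos_INR i). apply Rabs_le_between' in Ht. apply Rabs_def1; nra.
Qed.

(* The m x m grid of spacing sigma in the box of radius s around w; the index x stands for
   (x / m, x mod m). *)
Definition grid_point (w : pt) (s sigma : R) (m x : nat) : pt :=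
  (fst w - s + (INR (x / m) + / 2) * sigma, snd w - s + (INR (x mod m) + / 2) * sigma).

Lemma grid_point_unique (w c : pt) (s sigma rho : R) (m x x' : nat) :
  4 * rho < sigma ->
  cbox c (2 * rho) (grid_point w s sigma m x) -> cbox c (2 * rho) (grid_point w s sigma m x') ->
  x = x'.
Proof.
  intros Hsig Hx Hx'.
  apply cbox_sym in Hx, Hx'. destruct Hx as [Hx1 Hx2], Hx' as [Hx1' Hx2'].
  unfold grid_point in *; simpl in *.
  rewrite (Nat.div_mod_eq x m), (Nat.div_mod_eq x' m).
  rewrite (grid_coord_unique _ _ _ _ _ _ Hsig Hx1 Hx1').
  rewrite (grid_coord_unique _ _ _ _ _ _ Hsig Hx2 Hx2').
  reflexivity.
Qed.

Lemma grid_point_box_inside (w y : pt) (s sigma rho : R) (m x : nat) :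
  (x < m * m)%nat -> INR m * sigma <= 2 * s -> 2 * rho < sigma ->
  cbox (grid_point w s sigma m x) rho y -> obox w s y.
Proof.
  intros Hx Hms Hsig [Hy1 Hy2]. unfold grid_point in *. simpl in *.
  assert (Hm0 : (m <> 0)%nat) by (intros ->; lia).
  assert (Hxm : (x / m < m)%nat) by (apply Nat.Div0.div_lt_upper_bound; lia).
  assert (Hxr : (x mod m < m)%nat) by (apply Nat.mod_upper_bound; auto).
  split.
  - replace (fst y - fst w) with (fst y - (fst w - s + s)) by ring.
    apply (grid_coord_inside _ _ sigma rho _ (x / m) m); auto.
  - replace (snd y - snd w) with (snd y - (snd w - s + s)) by ring.
    apply (grid_coord_inside _ _ sigma rho _ (x mod m) m); auto.
Qed.

(* Pigeonhole: a box of radius rho is 2 rho-close to at most one grid point. *)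
Lemma grid_point_free (w : pt) (s sigma rho : R) (m : nat) (L : list pt) :
  4 * rho < sigma -> (length L < m * m)%nat ->
  exists x, (x < m * m)%nat /\ forall c, In c L -> ~ cbox c (2 * rho) (grid_point w s sigma m x).
Proof.
  intros Hsig Hfew. apply NNPP. intros Hnone.
  assert (Hle : (m * m <= length L)%nat).
  { apply (pigeonhole_cover _ L (fun c x => cbox c (2 * rho) (grid_point w s sigma m x))).
    - intros c x x'. apply grid_point_unique, Hsig.
    - intros x Hx. apply NNPP. intros Hnx. apply Hnone. exists x. split; auto.
      intros c Hc Hcx. apply Hnx. eauto. }
  lia.
Qed.

Lemma exists_grid_size (s sigma : R) : 0 < sigma <= s ->
  exists m : nat, INR m * sigma <= 2 * s /\ s <= INR m * sigma.
Proof.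
  intros [Hsig Hs]. destruct (nfloor_ex (2 * s / sigma)) as [m [Hm1 Hm2]].
  { left; apply Rdiv_lt_0_compat; lra. }
  exists m.
  apply (Rmult_le_compat_r sigma) in Hm1; [|lra].
  apply (Rmult_lt_compat_r sigma) in Hm2; [|lra].
  replace (2 * s / sigma * sigma) with (2 * s) in Hm1, Hm2 by (field; lra).
  split; lra.
Qed.

(* A box of radius s contains about (s / rho)^2 disjoint boxes of radius rho, so fewer
   boxes of radius rho cannot meet all of them. *)
Lemma box_grid_gap (w : pt) (s rho : R) (L : list pt) :
  0 < rho -> 5 * rho <= s -> INR (length L) * (5 * rho) ^ 2 < s ^ 2 ->
  exists w', (forall y, cbox w' rho y -> obox w s y) /\
     forall c, In c L -> forall y, cbox w' rho y -> ~ cbox c rho y.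
Proof.
  intros Hrho Hs Hcount.
  destruct (exists_grid_size s (5 * rho)) as [m [Hms Hmlow]]; [lra|].
  assert (Hfew : (length L < m * m)%nat).
  { apply INR_lt. rewrite mult_INR.
    assert (s ^ 2 <= (INR m * (5 * rho)) ^ 2) by (apply pow_incr; lra).
    apply (Rmult_lt_reg_r ((5 * rho) ^ 2)); nra. }
  destruct (grid_point_free w s (5 * rho) rho m L) as [x [Hx Hfar]]; [lra|auto|].
  exists (grid_point w s (5 * rho) m x). split.
  - intros y. apply (grid_point_box_inside _ _ _ _ _ m x); auto. lra.
  - intros c Hc y Hy Hcy. apply (Hfar c Hc).
    replace (2 * rho) with (rho + rho) by ring.
    apply (cbox_trans c y); auto. apply cbox_sym, Hy.
Qed.

Definition cell_center (c : pt) (e h : R) (ij : nat * nat) : pt :=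
  (fst c - e + (INR (fst ij) + / 2) * h, snd c - e + (INR (snd ij) + / 2) * h).

Lemma cell_coord_inside (a h t : R) (i N : nat) :
  (i < N)%nat -> Rabs (t - (a + (INR i + / 2) * h)) <= h / 2 -> a <= t <= a + INR N * h.
Proof.
  intros HiN Ht. apply le_INR in HiN. rewrite S_INR in HiN.
  pose proof (pos_INR i). apply Rabs_le_between' in Ht.
  assert (0 <= h) by (pose proof (Rabs_pos (t - (a + (INR i + / 2) * h))); lra).
  split; nra.
Qed.

Lemma cell_in_box (c : pt) (e h : R) (N : nat) (ij : nat * nat) (p : pt) :
  INR N * h = 2 * e -> In ij (list_prod (seq 0 N) (seq 0 N)) ->
  cbox (cell_center c e h ij) (h / 2) p -> cbox c e p.
Proof.
  intros HNh Hij [H1 H2]. destruct ij as [i j].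
  apply in_prod_iff in Hij. destruct Hij as [Hi Hj]. apply in_seq in Hi, Hj.
  apply (cell_coord_inside _ _ _ i N) in H1; [|lia].
  apply (cell_coord_inside _ _ _ j N) in H2; [|lia].
  split; apply Rabs_le_between'; lra.
Qed.

Lemma box_covered_by_cells (c : pt) (e h : R) (N : nat) (p : pt) :
  0 < h -> (1 <= N)%nat -> INR N * h = 2 * e -> cbox c e p ->
  exists ij, In ij (list_prod (seq 0 N) (seq 0 N)) /\ cbox (cell_center c e h ij) (h / 2) p.
Proof.
  intros Hh HN HNh [H1 H2]. apply Rabs_le_between' in H1, H2.
  destruct (interval_cell N h (fst c - e) (fst p)) as [i [Hi Hpi]]; auto; [lra|].
  destruct (interval_cell N h (snd c - e) (snd p)) as [j [Hj Hpj]]; auto; [lra|].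
  exists (i, j). split.
  - apply in_prod_iff. split; apply in_seq; lia.
  - split; simpl; apply Rabs_le_between'; lra.
Qed.

Lemma exists_fine_step (e t : R) : 0 < e -> 0 < t ->
  exists (N : nat) (h : R), (1 <= N)%nat /\ 0 < h /\ h < t /\ INR N * h = 2 * e.
Proof.
  intros He Ht. destruct (exists_inv_succ_lt (t / (2 * e))) as [K HK].
  { apply Rdiv_lt_0_compat; lra. }
  assert (HK0 : 0 < INR K + 1) by (pose proof (pos_INR K); lra).
  exists (S K), (2 * e / (INR K + 1)). rewrite S_INR.
  split; [lia|split; [apply Rdiv_lt_0_compat; lra|split]].
  - apply (Rmult_lt_compat_l (2 * e)) in HK; [|lra].
    replace (2 * e * (t / (2 * e))) with t in HK by (field; lra). exact HK.
  - field. lra.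
Qed.

Lemma exists_count_between (M eta : R) : 0 < eta <= M ->
  exists k : nat, (1 <= k)%nat /\ M <= eta * INR k <= 2 * M.
Proof.
  intros [Heta HM]. destruct (nfloor_ex (M / eta)) as [k0 [Hk1 Hk2]].
  { left; apply Rdiv_lt_0_compat; lra. }
  exists (S k0). rewrite S_INR. split; [lia|].
  apply (Rmult_le_compat_l eta) in Hk1; [|lra].
  apply (Rmult_lt_compat_l eta) in Hk2; [|lra].
  replace (eta * (M / eta)) with M in Hk1, Hk2 by (field; lra).
  split; lra.
Qed.

Lemma grid_count_estimate (e s M eta h rad : R) (N k : nat) :
  0 < eta -> 0 < h -> INR N * h = 2 * e -> eta * INR k <= 2 * M -> 0 <= rad <= 4 * eta * h ->
  3200 * e ^ 2 * M * eta < s ^ 2 -> INR (N * N * k) * (5 * rad) ^ 2 < s ^ 2.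
Proof.
  intros Heta Hh HNh Hk Hrad Hsmall. rewrite !mult_INR.
  pose proof (pos_INR N). pose proof (pos_INR k).
  assert (Hsq : (5 * rad) ^ 2 <= (20 * eta * h) ^ 2) by (apply pow_incr; lra).
  assert (Hexpand : INR N * INR N * INR k * (20 * eta * h) ^ 2
                    = 400 * (INR N * h) ^ 2 * (eta * INR k) * eta) by ring.
  rewrite HNh in Hexpand.
  assert (INR N * INR N * INR k * (5 * rad) ^ 2 <= INR N * INR N * INR k * (20 * eta * h) ^ 2)
    by (apply Rmult_le_compat_l; [apply Rmult_le_pos; [nra|lra]|exact Hsq]).
  assert (400 * (2 * e) ^ 2 * (eta * INR k) * eta <= 400 * (2 * e) ^ 2 * (2 * M) * eta).
  { apply Rmult_le_compat_r; [lra|]. apply Rmult_le_compat_l; [nra|exact Hk]. }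
  nra.
Qed.

Lemma exists_small_factor (A B : R) : 0 < A -> 0 < B -> exists eta, 0 < eta <= 1 /\ A * eta < B.
Proof.
  intros HA HB. exists (Rmin 1 (B / (2 * A))).
  pose proof (Rmin_r 1 (B / (2 * A))) as Hr.
  apply (Rmult_le_compat_l A) in Hr; [|lra].
  replace (A * (B / (2 * A))) with (B / 2) in Hr by (field; lra).
  split; [split; [apply Rmin_glb_lt; [lra|apply Rdiv_lt_0_compat; lra]|apply Rmin_l]|lra].
Qed.

Lemma cover_radius_le (M eta h : R) (k : nat) :
  0 < M -> 0 < eta -> 0 < h -> M <= eta * INR k ->
  0 < 2 * M * h / INR k + 2 * eta * h <= 4 * eta * h.
Proof.
  intros HM Heta Hh Hk.
  assert (Hk0 : 0 < INR k) by (apply (Rmult_lt_reg_l eta); lra).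
  assert (0 < 2 * M * h / INR k <= 2 * eta * h).
  { split; [apply Rdiv_lt_0_compat; nra|].
    apply (Rmult_le_reg_r (INR k)); auto.
    unfold Rdiv. rewrite Rmult_assoc, Rinv_l by lra. nra. }
  nra.
Qed.

Lemma critical_values_box_cover (f : pt -> pt) (U : pt -> Prop) (c : pt)
    (e M eta delta h : R) (N k : nat) :
  C1_map_on f U -> (forall p, cbox c e p -> U p) ->
  (forall p, cbox c e p -> partials_bounded f M p) ->
  (forall p q, cbox c e p -> cbox c e q -> cbox p delta q -> partials_close f eta p q) ->
  0 < M -> 0 < h -> h <= delta -> (1 <= N)%nat -> INR N * h = 2 * e -> (1 <= k)%nat ->
  exists L : list pt, length L = (N * N * k)%nat /\
    forall z, cbox c e z -> jac f z = 0 ->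
      exists c', In c' L /\ cbox c' (2 * M * h / INR k + 2 * eta * h) (f z).
Proof.
  intros HC HU HM Hclose HM0 Hh Hhd HN HNh Hk.
  set (cells := list_prod (seq 0 N) (seq 0 N)).
  assert (Hcover : forall ij, exists cen : list pt, In ij cells -> length cen = k /\
            forall z, cbox (cell_center c e h ij) (h / 2) z -> jac f z = 0 ->
              exists c', In c' cen /\ cbox c' (2 * M * h / INR k + 2 * eta * h) (f z)).
  { intros ij. destruct (classic (In ij cells)) as [Hij|Hij]; [|exists nil; contradiction].
    assert (Hsub : forall p, cbox (cell_center c e h ij) (h / 2) p -> cbox c e p)
      by (intros p; apply (cell_in_box c e h N ij); auto).
    assert (Hcell_close : forall x y, cbox (cell_center c e h ij) (h / 2) x ->
              cbox (cell_center c e h ij) (h / 2) y -> partials_close f eta x y).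
    { intros x y Hx Hy. apply Hclose; auto.
      replace delta with (h / 2 + (delta - h / 2)) by ring.
      apply (cbox_trans x (cell_center c e h ij)); [apply cbox_sym, Hx|].
      destruct Hy as [Hy1 Hy2]; split; lra. }
    destruct (critical_cell_cover f U (cell_center c e h ij) h eta M k HC
                (fun x Hx => HU x (Hsub x Hx)) Hh HM0 Hk
                (fun x Hx => HM x (Hsub x Hx)) Hcell_close) as [cen Hcen].
    exists cen. auto. }
  destruct (functional_choice _ Hcover) as [CEN HCEN].
  exists (flat_map CEN cells). split.
  - rewrite (flat_map_constant_length (c := k)); [|intros ij Hij; apply (HCEN ij Hij)].
    unfold cells. rewrite length_prod, length_seq. reflexivity.
  - intros z Hz Jz.
    destruct (box_covered_by_cells c e h N z) as [ij [Hij Hzij]]; auto.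
    destruct (proj2 (HCEN ij Hij) z Hzij Jz) as [c' [Hc' Hfz]].
    exists c'. split; auto. apply in_flat_map. eauto.
Qed.

Theorem critical_values_nowhere_dense (f : pt -> pt) (U : pt -> Prop) (c : pt) (e Mb : R) :
  C1_map_on f U -> 0 < e -> (forall p, cbox c e p -> U p) ->
  (forall p, cbox c e p -> partials_bounded f Mb p) ->
  nowhere_dense (fun y => exists z, cbox c e z /\ jac f z = 0 /\ f z = y).
Proof.
  intros HC He HU HMb w s Hs.
  set (M := Rmax Mb 1).
  assert (HM1 : 1 <= M) by apply Rmax_r.
  assert (HbdM : forall p, cbox c e p -> partials_bounded f M p).
  { intros p Hp. apply (partials_bounded_mono f Mb); [apply Rmax_l|auto]. }
  destruct (exists_small_factor (3200 * e ^ 2 * M) (s ^ 2)) as [eta [Heta Hsmall]];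
    [apply Rmult_lt_0_compat; nra|nra|].
  destruct (partials_uniformly_close f U c e HC HU eta) as [delta [Hdelta Hclose]]; [lra|].
  destruct (exists_fine_step e (Rmin delta (s / 20))) as (N & h & HN & Hh & Hht & HNh);
    [auto|apply Rmin_glb_lt; lra|].
  pose proof (Rmin_l delta (s / 20)). pose proof (Rmin_r delta (s / 20)).
  destruct (exists_count_between M eta) as (k & Hk & Hketa); [lra|].
  destruct (critical_values_box_cover f U c e M eta delta h N k) as [L [HL Hcov]]; auto; try lra.
  set (rad := 2 * M * h / INR k + 2 * eta * h) in Hcov.
  assert (Hrad : 0 < rad <= 4 * eta * h) by (apply cover_radius_le; lra).
  destruct (box_grid_gap w s rad L) as [w' [Hin Hgap]]; [lra|nra| |].
  { rewrite HL. apply (grid_count_estimate e s M eta h rad); lra. }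
  exists w', rad. split; [lra|split; auto].
  intros y Hy [z [Hz [Jz <-]]].
  destruct (Hcov z Hz Jz) as [c' [Hc' Hfz]].
  exact (Hgap c' Hc' (f z) Hy Hfz).
Qed.

(** * Values on the boundary at regular points *)

Lemma partials_close_near (f : pt -> pt) (U : pt -> Prop) (z : pt) (eps : R) :
  C1_map_on f U -> plane_open U -> U z -> 0 < eps ->
  exists rho, 0 < rho /\ forall p, dist z p < rho -> U p /\ partials_close f eps p z.
Proof.
  intros [Hu Hv] HUo Hz Heps.
  destruct (Hu z Hz) as (_ & _ & _ & Cux & Cuy). destruct (Hv z Hz) as (_ & _ & _ & Cvx & Cvy).
  destruct (Cux eps Heps) as [r1 [Hr1 R1]]. destruct (Cuy eps Heps) as [r2 [Hr2 R2]].
  destruct (Cvx eps Heps) as [r3 [Hr3 R3]]. destruct (Cvy eps Heps) as [r4 [Hr4 R4]].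
  destruct (HUo z Hz) as [r0 [Hr0 R0]].
  destruct (Rmin_pos_le r1 r2) as (H12 & H1 & H2); auto.
  destruct (Rmin_pos_le r3 r4) as (H34 & H3 & H4); auto.
  destruct (Rmin_pos_le _ _ H12 H34) as (H1234 & H5 & H6).
  destruct (Rmin_pos_le r0 _ Hr0 H1234) as (Hrho & H7 & H8).
  exists (Rmin r0 (Rmin (Rmin r1 r2) (Rmin r3 r4))). split; auto.
  intros p Hp. split; [apply R0; lra|].
  repeat split; apply Rlt_le; [apply R1|apply R2|apply R3|apply R4]; lra.
Qed.

Definition partials_norm (f : pt -> pt) (z : pt) : R :=
  Rabs (dx (re f) z) + Rabs (dy (re f) z) + Rabs (dx (im f) z) + Rabs (dy (im f) z).

Lemma partials_bounded_of_close (f : pt -> pt) (eta : R) (p z : pt) :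
  partials_close f eta p z -> partials_bounded f (partials_norm f z + eta) p.
Proof.
  unfold partials_norm. intros (H1 & H2 & H3 & H4).
  pose proof (Rabs_triang_inv (dx (re f) p) (dx (re f) z)).
  pose proof (Rabs_triang_inv (dy (re f) p) (dy (re f) z)).
  pose proof (Rabs_triang_inv (dx (im f) p) (dx (im f) z)).
  pose proof (Rabs_triang_inv (dy (im f) p) (dy (im f) z)).
  pose proof (Rabs_pos (dx (re f) z)). pose proof (Rabs_pos (dy (re f) z)).
  pose proof (Rabs_pos (dx (im f) z)). pose proof (Rabs_pos (dy (im f) z)).
  repeat split; lra.
Qed.

(* Cramer's rule: [D v = adj(A) (A v)] with [D = det A]. *)
Lemma det_lower_bound (a b c d v1 v2 : R) :
  Rabs (a * d - b * c) * (Rabs v1 + Rabs v2) <=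
  (Rabs a + Rabs b + Rabs c + Rabs d) * (Rabs (a * v1 + b * v2) + Rabs (c * v1 + d * v2)).
Proof.
  set (X := a * v1 + b * v2). set (Y := c * v1 + d * v2).
  assert (F1 : Rabs (a * d - b * c) * Rabs v1 <= Rabs d * Rabs X + Rabs b * Rabs Y).
  { rewrite <- Rabs_mult, <- !Rabs_mult.
    replace ((a * d - b * c) * v1) with (d * X + - (b * Y)) by (unfold X, Y; ring).
    rewrite <- (Rabs_Ropp (b * Y)). apply Rabs_triang. }
  assert (F2 : Rabs (a * d - b * c) * Rabs v2 <= Rabs a * Rabs Y + Rabs c * Rabs X).
  { rewrite <- Rabs_mult, <- !Rabs_mult.
    replace ((a * d - b * c) * v2) with (a * Y + - (c * X)) by (unfold X, Y; ring).
    rewrite <- (Rabs_Ropp (c * X)). apply Rabs_triang. }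
  pose proof (Rabs_pos a); pose proof (Rabs_pos b); pose proof (Rabs_pos c);
  pose proof (Rabs_pos d); pose proof (Rabs_pos X); pose proof (Rabs_pos Y). nra.
Qed.

Definition lower_lipschitz_on (f : pt -> pt) (k : R) (B : pt -> Prop) : Prop :=
  forall p q, B p -> B q -> k * dist1 p q <= dist1 (f p) (f q).

Lemma perturbed_linear_lower_bound (a b c d v1 v2 u v eps : R) :
  0 < Rabs a + Rabs b + Rabs c + Rabs d ->
  4 * (Rabs a + Rabs b + Rabs c + Rabs d) * eps = Rabs (a * d - b * c) ->
  Rabs (u - (a * v1 + b * v2)) <= eps * (Rabs v1 + Rabs v2) ->
  Rabs (v - (c * v1 + d * v2)) <= eps * (Rabs v1 + Rabs v2) ->
  Rabs (a * d - b * c) / (2 * (Rabs a + Rabs b + Rabs c + Rabs d)) * (Rabs v1 + Rabs v2)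
    <= Rabs u + Rabs v.
Proof.
  intros HM Heps Hu Hv.
  set (M := Rabs a + Rabs b + Rabs c + Rabs d) in *.
  set (X := a * v1 + b * v2) in *. set (Y := c * v1 + d * v2) in *.
  pose proof (det_lower_bound a b c d v1 v2) as Hdet. fold M X Y in Hdet.
  pose proof (Rabs_triang_inv X u). pose proof (Rabs_triang_inv Y v).
  rewrite Rabs_minus_sym in Hu, Hv.
  assert (HXY : M * (Rabs X + Rabs Y) <= M * (Rabs u + Rabs v + 2 * eps * (Rabs v1 + Rabs v2)))
    by (apply Rmult_le_compat_l; lra).
  apply (Rmult_le_reg_l (2 * M)); [lra|].
  replace (2 * M * (Rabs (a * d - b * c) / (2 * M) * (Rabs v1 + Rabs v2)))
    with (Rabs (a * d - b * c) * (Rabs v1 + Rabs v2)) by (field; lra).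
  rewrite <- Heps in Hdet |- *. lra.
Qed.

Lemma partials_norm_pos (f : pt -> pt) (z : pt) : jac f z <> 0 -> 0 < partials_norm f z.
Proof.
  intros HJ. unfold partials_norm.
  pose proof (Rabs_pos (dx (re f) z)); pose proof (Rabs_pos (dy (re f) z));
  pose proof (Rabs_pos (dx (im f) z)); pose proof (Rabs_pos (dy (im f) z)).
  apply Rnot_le_lt. intros Hle. apply HJ. unfold jac.
  rewrite (Rabs_eq_0 (dx (re f) z)), (Rabs_eq_0 (dy (re f) z)) by lra. ring.
Qed.

Lemma lower_lipschitz_near_regular_point (f : pt -> pt) (U : pt -> Prop) (z : pt) :
  C1_map_on f U -> plane_open U -> U z -> jac f z <> 0 ->
  exists rho k, 0 < rho /\ 0 < k /\ (forall p, obox z rho p -> U p) /\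
    lower_lipschitz_on f k (obox z rho).
Proof.
  intros HC HUo Hz HJ.
  set (D := Rabs (jac f z)). set (Mz := partials_norm f z).
  assert (HD : 0 < D) by (apply Rabs_pos_lt; auto).
  assert (HMz : 0 < Mz) by (apply partials_norm_pos; auto).
  set (eps := D / (4 * Mz)).
  assert (Heps : 0 < eps) by (unfold eps; apply Rdiv_lt_0_compat; lra).
  destruct (partials_close_near f U z eps HC HUo Hz Heps) as [r [Hr Hnear]].
  assert (Hbox : forall p, cbox z (r / 4) p -> U p /\ partials_close f eps p z).
  { intros p Hp. apply Hnear, dist_of_obox_half, (cbox_obox z (r / 4)); auto; lra. }
  exists (r / 4), (D / (2 * Mz)).
  split; [lra|split; [apply Rdiv_lt_0_compat; lra|split]].
  { intros p Hp. apply Hbox, obox_cbox, Hp. }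
  intros p q Hp Hq. apply obox_cbox in Hp, Hq.
  destruct (C1_map_affine_approx f U z z (r / 4) eps HC (fun x Hx => proj1 (Hbox x Hx))
              (fun x Hx => proj2 (Hbox x Hx)) p q Hp Hq) as [Eu Ev].
  unfold dist1 at 2. unfold D, Mz, jac, partials_norm in *.
  apply (perturbed_linear_lower_bound _ _ _ _ _ _ _ _ eps); auto.
  unfold eps. field. lra.
Qed.

Lemma cont_map_near (f : pt -> pt) (p : pt) (eps : R) :
  cont_at (re f) p -> cont_at (im f) p -> 0 < eps ->
  exists d, 0 < d /\ forall q, dist p q < d -> obox (f p) eps (f q).
Proof.
  intros Hu Hv Heps.
  destruct (Hu eps Heps) as [d1 [Hd1 H1]]. destruct (Hv eps Heps) as [d2 [Hd2 H2]].
  destruct (Rmin_pos_le d1 d2 Hd1 Hd2) as (Hd & Hle1 & Hle2).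
  exists (Rmin d1 d2). split; auto. intros q Hq.
  split; [apply H1|apply H2]; lra.
Qed.

Theorem boundary_values_nowhere_dense (Rs : pt -> Prop) (f : pt -> pt) (c : pt) (e k : R) :
  plane_open Rs -> 0 < e -> 0 < k ->
  (forall p, cbox c e p -> cont_at (re f) p /\ cont_at (im f) p) ->
  lower_lipschitz_on f k (obox c (2 * e)) ->
  nowhere_dense (fun y => exists z, cbox c e z /\ plane_boundary Rs z /\ f z = y).
Proof.
  intros Hop He Hk Hcont Hlow w r Hr.
  destruct (classic (exists z, cbox c e z /\ plane_boundary Rs z /\ obox w (r / 2) (f z)))
    as [[z' [Hz'c [[Hcl _] Hz'w]]] | Hno].
  2:{ exists w, (r / 4). split; [lra|split].
      - intros y [H1 H2]; split; lra.
      - intros y [H1 H2] [z [Hz [Hzb <-]]]. apply Hno. exists z.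
        split; [exact Hz|split; [exact Hzb|split; lra]]. }
  destruct (Hcont z' Hz'c) as [Hcu Hcv].
  destruct (cont_map_near f z' (r / 4) Hcu Hcv) as [d [Hd Hnear]]; [lra|].
  destruct (Rmin_pos_le (e / 2) d) as (Hed & Hed1 & Hed2); [lra|auto|].
  destruct (Hcl _ Hed) as [z'' [Hz''R Hdz'']].
  assert (Hz''c : obox c (2 * e) z'').
  { apply (cbox_obox c (e + e / 2)); [lra|].
    apply (cbox_trans c z'); auto. apply cbox_of_dist. lra. }
  assert (Hfz'' : obox (f z') (r / 4) (f z'')) by (apply Hnear; lra).
  destruct (Hop z'' Hz''R) as [r0 [Hr0 Hball]].
  assert (Hkr0 : 0 < k * r0) by (apply Rmult_lt_0_compat; auto).
  destruct (Rmin_pos_le (r / 8) (k * r0 / 4)) as (Hrho & Hrho1 & Hrho2); [lra|lra|].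
  exists (f z''), (Rmin (r / 8) (k * r0 / 4)). split; [exact Hrho|split].
  - intros y Hy. apply (cbox_obox w (r / 2 + r / 4 + Rmin (r / 8) (k * r0 / 4))); [lra|].
    apply (cbox_trans w (f z'')); auto.
    apply (cbox_trans w (f z')); apply obox_cbox; auto.
  - intros y Hy [q [Hq [[_ Hqint] <-]]].
    assert (Hfar : r0 <= dist1 z'' q).
    { apply Rnot_lt_le. intros Hlt. apply Hqint, Hop, Hball.
      pose proof (dist_le_dist1 z'' q). lra. }
    pose proof (Hlow z'' q Hz''c (cbox_obox c e (2 * e) q ltac:(lra) Hq)) as Hl.
    destruct Hy as [Hy1 Hy2]. unfold dist1 at 2 in Hl.
    rewrite (Rabs_minus_sym (fst (f z''))), (Rabs_minus_sym (snd (f z''))) in Hl.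
    pose proof (Rmult_le_compat_l k _ _ (Rlt_le _ _ Hk) Hfar). lra.
Qed.

(** * A countable cover *)

Definition grid_step (n : nat) : R := / (INR n + 1).

Lemma grid_step_pos (n : nat) : 0 < grid_step n.
Proof. apply Rinv_0_lt_compat. pose proof (pos_INR n). lra. Qed.

(* Boxes with center ((a - b) s, (c - d) s) and radius s = 1 / (n + 1), enumerated by nat. *)
Definition rational_box (i : nat) : pt * R :=
  let '(n, i1) := Cantor.of_nat i in
  let '(a, i2) := Cantor.of_nat i1 in
  let '(b, i3) := Cantor.of_nat i2 in
  let '(c, d) := Cantor.of_nat i3 in
  (((INR a - INR b) * grid_step n, (INR c - INR d) * grid_step n), grid_step n).

Lemma rational_box_radius_pos (i : nat) : 0 < snd (rational_box i).
Proof.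
  unfold rational_box.
  destruct (Cantor.of_nat i) as [n i1]; destruct (Cantor.of_nat i1) as [a i2];
  destruct (Cantor.of_nat i2) as [b i3]; destruct (Cantor.of_nat i3) as [c d].
  apply grid_step_pos.
Qed.

Lemma near_nat_difference (x : R) : exists a b : nat, Rabs (x - (INR a - INR b)) <= 1.
Proof.
  destruct (Rle_dec 0 x) as [Hx|Hx].
  - destruct (nfloor_ex x Hx) as [n [H1 H2]]. exists n, 0%nat. simpl.
    rewrite Rminus_0_r. apply Rabs_le. lra.
  - destruct (nfloor_ex (- x)) as [n [H1 H2]]; [lra|]. exists 0%nat, n. simpl.
    apply Rabs_le. lra.
Qed.

Lemma grid_coord_near (x s : R) : 0 < s -> exists a b : nat, Rabs (x - (INR a - INR b) * s) <= s.
Proof.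
  intros Hs. destruct (near_nat_difference (x / s)) as [a [b Hab]]. exists a, b.
  replace (x - (INR a - INR b) * s) with ((x / s - (INR a - INR b)) * s) by (field; lra).
  rewrite Rabs_mult, (Rabs_pos_eq s) by lra.
  pose proof (Rmult_le_compat_r s _ _ (Rlt_le _ _ Hs) Hab). lra.
Qed.

Lemma rational_box_around (z : pt) (rho : R) : 0 < rho -> exists i,
  cbox (fst (rational_box i)) (snd (rational_box i)) z /\
  forall p, obox (fst (rational_box i)) (2 * snd (rational_box i)) p -> obox z rho p.
Proof.
  intros Hrho. destruct (exists_inv_succ_lt (rho / 3)) as [n Hn]; [lra|].
  fold (grid_step n) in Hn. pose proof (grid_step_pos n) as Hs.
  destruct (grid_coord_near (fst z) (grid_step n) Hs) as [a [b Hab]].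
  destruct (grid_coord_near (snd z) (grid_step n) Hs) as [c [d Hcd]].
  exists (Cantor.to_nat (n, Cantor.to_nat (a, Cantor.to_nat (b, Cantor.to_nat (c, d))))).
  unfold rational_box. rewrite !Cantor.cancel_of_to. simpl.
  set (C := ((INR a - INR b) * grid_step n, (INR c - INR d) * grid_step n)).
  assert (HzC : cbox C (grid_step n) z) by (split; simpl; auto).
  split; auto.
  intros p Hp. apply obox_cbox in Hp.
  apply (cbox_obox z (grid_step n + 2 * grid_step n)); [lra|].
  apply (cbox_trans z C); auto. apply cbox_sym, HzC.
Qed.

Section CountableCover.
Variables (Rs R1 : pt -> Prop) (f : pt -> pt).
Hypotheses (HRs : plane_open Rs) (HR1 : plane_open R1) (HC : C1_map_on f R1).

Definition critical_piece (C : pt) (e : R) (y : pt) : Prop :=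
  ((forall p, obox C (2 * e) p -> R1 p) /\
   exists M, forall p, cbox C e p -> partials_bounded f M p) /\
  exists z, cbox C e z /\ jac f z = 0 /\ f z = y.

Definition boundary_piece (C : pt) (e : R) (y : pt) : Prop :=
  ((forall p, obox C (2 * e) p -> R1 p) /\
   exists k, 0 < k /\ lower_lipschitz_on f k (obox C (2 * e))) /\
  exists z, cbox C e z /\ plane_boundary Rs z /\ f z = y.

Definition box_piece (i : nat) (y : pt) : Prop :=
  critical_piece (fst (rational_box i)) (snd (rational_box i)) y \/
  boundary_piece (fst (rational_box i)) (snd (rational_box i)) y.

Lemma critical_piece_nowhere_dense (C : pt) (e : R) :
  0 < e -> nowhere_dense (critical_piece C e).
Proof.
  intros He.
  destruct (classic ((forall p, obox C (2 * e) p -> R1 p) /\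
                     exists M, forall p, cbox C e p -> partials_bounded f M p))
    as [[HU [M HM]] | Hbad].
  - apply nowhere_dense_subset with (F := fun y => exists z, cbox C e z /\ jac f z = 0 /\ f z = y).
    + apply (critical_values_nowhere_dense f R1 C e M HC He); auto.
      intros p Hp. apply HU, (cbox_obox C e); auto; lra.
    + intros y [_ Hy]. exact Hy.
  - apply nowhere_dense_empty. intros y [Hgood _]. contradiction.
Qed.

Lemma boundary_piece_nowhere_dense (C : pt) (e : R) :
  0 < e -> nowhere_dense (boundary_piece C e).
Proof.
  intros He.
  destruct (classic ((forall p, obox C (2 * e) p -> R1 p) /\
                     exists k, 0 < k /\ lower_lipschitz_on f k (obox C (2 * e))))
    as [[HU [k [Hk Hlow]]] | Hbad].
  - apply nowhere_dense_subset
      with (F := fun y => exists z, cbox C e z /\ plane_boundary Rs z /\ f z = y).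
    + apply (boundary_values_nowhere_dense Rs f C e k HRs He Hk); auto.
      intros p Hp. assert (HpR1 : R1 p) by (apply HU, (cbox_obox C e); auto; lra).
      destruct HC as [Hu Hv]. split; [apply (Hu p HpR1)|apply (Hv p HpR1)].
    + intros y [_ Hy]. exact Hy.
  - apply nowhere_dense_empty. intros y [Hgood _]. contradiction.
Qed.

Lemma box_piece_nowhere_dense (i : nat) : nowhere_dense (box_piece i).
Proof.
  apply nowhere_dense_union.
  - apply critical_piece_nowhere_dense, rational_box_radius_pos.
  - apply boundary_piece_nowhere_dense, rational_box_radius_pos.
Qed.

Lemma critical_value_in_piece (z : pt) : R1 z -> jac f z = 0 -> exists i, box_piece i (f z).
Proof.
  intros Hz Jz.
  destruct (partials_close_near f R1 z 1 HC HR1 Hz) as [r [Hr Hnear]]; [lra|].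
  destruct (rational_box_around z (r / 2)) as [i [Hzi Hsub]]; [lra|].
  assert (Hball : forall p, obox (fst (rational_box i)) (2 * snd (rational_box i)) p ->
                    R1 p /\ partials_close f 1 p z).
  { intros p Hp. apply Hnear, dist_of_obox_half, Hsub, Hp. }
  pose proof (rational_box_radius_pos i).
  exists i. left. split; [split|exists z; auto].
  - intros p Hp. apply Hball, Hp.
  - exists (partials_norm f z + 1). intros p Hp.
    apply partials_bounded_of_close, Hball, (cbox_obox _ (snd (rational_box i))); auto; lra.
Qed.

Lemma regular_boundary_value_in_piece (z : pt) :
  R1 z -> jac f z <> 0 -> plane_boundary Rs z -> exists i, box_piece i (f z).
Proof.
  intros Hz Jz Hzb.
  destruct (lower_lipschitz_near_regular_point f R1 z HC HR1 Hz Jz)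
    as [rho [k [Hrho [Hk [HU Hlow]]]]].
  destruct (rational_box_around z rho Hrho) as [i [Hzi Hsub]].
  exists i. right. split; [split|exists z; auto].
  - intros p Hp. apply HU, Hsub, Hp.
  - exists k. split; auto. intros p q Hp Hq. apply Hlow; apply Hsub; auto.
Qed.

End CountableCover.

Theorem lemma4p15 (Rs R1 : pt -> Prop) (f : pt -> pt) :
  plane_open Rs -> plane_bounded Rs ->
  harmonic_on f Rs ->
  let P := fun z => plane_interior (plane_closure Rs) z /\ ~ Rs z in
  finite_set P -> (forall a, P a -> is_pole f a) ->
  plane_open R1 -> (forall z, plane_closure Rs z -> ~ P z -> R1 z) ->
  C1_map_on f R1 ->
  forall w, ~ plane_interior
    (fun w' => (exists z, Rs z /\ jac f z = 0 /\ f z = w') \/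
               (exists z, plane_boundary Rs z /\ ~ P z /\ f z = w')) w.
Proof.
  intros HRs _ _ P _ _ HR1 HP HC w [rho [Hrho Hin]].
  destruct (baire_category (box_piece Rs R1 f) (box_piece_nowhere_dense Rs R1 f HRs HC)
              w (rho / 2)) as [y [Hy Hnot]]; [lra|].
  assert (Hcrit : forall z, R1 z -> jac f z = 0 -> f z <> y).
  { intros z Hz Jz <-. destruct (critical_value_in_piece Rs R1 f HR1 HC z Hz Jz) as [i Hi].
    exact (Hnot i Hi). }
  destruct (Hin y (dist_of_obox_half w y rho Hy)) as [[z [Hz [Jz Ez]]] | [z [Hzb [HzP Ez]]]].
  - apply (Hcrit z); auto. apply HP.
    + intros r Hr. exists z. rewrite dist_diag. auto.
    + intros [_ Hn]. contradiction.
  - assert (HzR1 : R1 z) by (apply HP; [apply Hzb|exact HzP]).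
    destruct (classic (jac f z = 0)) as [Jz|Jz]; [exact (Hcrit z HzR1 Jz Ez)|].
    destruct (regular_boundary_value_in_piece Rs R1 f HR1 HC z HzR1 Jz Hzb) as [i Hi].
    rewrite Ez in Hi. exact (Hnot i Hi).
Qed.
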